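(* Let $\nu\in\mathbb{N}$, let $(X,d)$ be a $\nu$-generalized metric space, let $T:X\to X$, and let $m:X\times X\to[0,\infty)$. Suppose that for some $x\in X$ the following hold: (i) for every $\epsilon>0$ there exist $\delta>0$ and $N\in\mathbb{Z}^+$ such that for all $p,q\ge N$, $m(T^px,T^qx)<\delta+\epsilon$ implies $d(T^{p+1}x,T^{q+1}x)\le\epsilon$; (ii) for any two subsequences $\{T^{p_i}x\}$ and $\{T^{q_i}x\}$ of $\{T^nx\}$, $\limsup_{i\to\infty} m(T^{p_i}x,T^{q_i}x)\le\limsup_{i\to\infty} d(T^{p_i}x,T^{q_i}x)$; (iii) $d(T^nx,T^{n+1}x)+d(T^nx,T^{n+2}x)\to0$ as $n\to\infty$. Then $\{T^nx\}$ is a Cauchy sequence.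
   Context: Let $X$ be a nonempty set, $d:X\times X\to[0,\infty)$, and $\nu\in\mathbb{N}$. $(X,d)$ is a $\nu$-generalized metric space if: (1) $d(x,y)=0$ iff $x=y$; (2) $d(x,y)=d(y,x)$ for all $x,y$; (3) $d(x,y)\le d(x,u_1)+d(u_1,u_2)+\dots+d(u_\nu,y)$ for every set $\{x,u_1,\dots,u_\nu,y\}$ of $\nu+2$ pairwise distinct elements of $X$. A sequence $\{x_n\}$ in $X$ is Cauchy if $\lim_{n\to\infty}\sup\{d(x_n,x_{n+1+m}): m\in\mathbb{Z}^+\}=0$, where $\mathbb{Z}^+$ denotes the nonnegative integers. A subsequence $\{x_{p_i}\}$ means $p_1<p_2<\cdots$. $T^n$ denotes the $n$-th iterate of $T$. *)

From Stdlib Require Import Reals Lra Lia List.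
Import ListNotations.
Open Scope R_scope.

Fixpoint path_len {X : Type} (d : X -> X -> R) (l : list X) : R :=
  match l with
  | a :: ((b :: _) as t) => d a b + path_len d t
  | _ => 0
  end.

Definition gen_metric (nu : nat) {X : Type} (d : X -> X -> R) : Prop :=
  (forall x y, 0 <= d x y) /\
  (forall x y, d x y = 0 <-> x = y) /\
  (forall x y, d x y = d y x) /\
  (forall (x y : X) (us : list X), length us = nu ->
     NoDup (x :: us ++ [y]) -> d x y <= path_len d (x :: us ++ [y])).

Fixpoint iter {X : Type} (n : nat) (T : X -> X) (x : X) : X :=
  match n with
  | O => x
  | S k => T (iter k T x)
  end.

Inductive ereal : Type := EFin (r : R) | EPInf | ENInf.

Definition ele (a b : ereal) : Prop :=
  match a, b with
  | ENInf, _ => True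
  | _, EPInf => True
  | EFin x, EFin y => x <= y
  | _, _ => False
  end.

Definition is_limsup (a : nat -> R) (L : ereal) : Prop :=
  match L with
  | EFin l =>
      (forall eps, 0 < eps -> exists N, forall i, (N <= i)%nat -> a i < l + eps) /\
      (forall eps, 0 < eps -> forall N, exists i, (N <= i)%nat /\ l - eps < a i)
  | EPInf => forall M N, exists i, (N <= i)%nat /\ M < a i
  | ENInf => forall M, exists N, forall i, (N <= i)%nat -> a i < M
  end.

(* limsup a <= limsup b (every real sequence has a unique limsup in ereal). *)
Definition limsup_le (a b : nat -> R) : Prop :=
  forall La Lb, is_limsup a La -> is_limsup b Lb -> ele La Lb.

Definition strictly_increasing (p : nat -> nat) : Prop :=
  forall i, (p i < p (S i))%nat.

Definition gm_cauchy {X : Type} (d : X -> X -> R) (x : nat -> X) : Prop :=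
  forall eps, 0 < eps -> exists N, forall n, (N <= n)%nat ->
    forall m, d (x n) (x (n + 1 + m)%nat) <= eps.

From Stdlib Require Import Reals List Lra Lia Wf_nat Classical ClassicalEpsilon.
From Coquelicot Require Lim_seq.
Import ListNotations.
Open Scope R_scope.

(* If the orbit repeats a point it is eventually periodic, so its vanishing
   step lengths are eventually zero and the orbit is eventually constant.
   Otherwise all points are distinct, so the generalized triangle inequality
   applies to any nu + 2 of them.  Walks with steps of length 1 or 2 show
   that d(x_n, x_(n+k)) is small for k <= nu + 1; hence if the orbit is not
   Cauchy with gap eps, the first q with d(x_n, x_q) > eps is far from n,
   and the walk x_(n-1), x_n, x_(q-nu), ..., x_(q-1) gives
   d(x_(n-1), x_(q-1)) <= eps + delta/2, while (i) forces
   m(x_(n-1), x_(q-1)) >= eps + delta.  Infinitely many such index pairs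
   contradict (ii). *)

Lemma path_len_map_seq {X : Type} (d : X -> X -> R) (F : nat -> X) (len : nat) :
  forall a, path_len d (map F (seq a (S (S len)))) =
            sum_f_R0 (fun i => d (F (a + i)%nat) (F (S (a + i)))) len.
Proof.
  induction len as [|len IH]; intros a.
  - simpl. rewrite Nat.add_0_r. ring.
  - change (path_len d (map F (seq a (S (S (S len))))))
      with (d (F a) (F (S a)) + path_len d (map F (seq (S a) (S (S len))))).
    rewrite IH, (decomp_sum _ (S len)) by lia. simpl pred. rewrite Nat.add_0_r.
    f_equal. apply sum_eq. intros i _. now rewrite Nat.add_succ_r.
Qed.

Lemma sum_f_R0_le_head (A : nat -> R) (n : nat) (c : R) :
  (forall i, (1 <= i <= n)%nat -> A i <= c) -> sum_f_R0 A n <= A 0%nat + c * INR n.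
Proof.
  induction n as [|n IH]; intros HA.
  - simpl. lra.
  - rewrite tech5, S_INR.
    assert (Hn := HA (S n) ltac:(lia)).
    assert (IH' := IH ltac:(intros i Hi; apply HA; lia)).
    lra.
Qed.

Definition short_step (a b : nat) : Prop :=
  (b = a + 1 \/ b = a + 2 \/ a = b + 1 \/ a = b + 2)%nat.

(* Go up by ones to k - 1, then out along k + 1, k + 3, ... and back along
   ..., k + 2, k: a walk of exactly L short steps through distinct points. *)
Lemma hairpin_walk (k L : nat) : (1 <= k <= L)%nat ->
  exists h : nat -> nat,
    h 0%nat = 0%nat /\ h L = k /\
    (forall i j, (i <= L)%nat -> (j <= L)%nat -> h i = h j -> i = j) /\
    (forall i, (i < L)%nat -> short_step (h i) (h (S i))).
Proof.
  intros Hk.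
  set (s := (L - k + 1)%nat).
  assert (Ha : exists a, (s = 2 * a \/ s = 2 * a + 1)%nat).
  { destruct (Nat.Even_or_Odd s) as [[a Ha]|[a Ha]]; exists a; lia. }
  destruct Ha as [a Ha].
  exists (fun i => if Nat.ltb i k then i else
     (k + (if Nat.leb (i - k + 1) a then 2 * (i - k + 1) - 1
           else 2 * (s - (i - k + 1))))%nat).
  unfold short_step.
  repeat split; intros;
    repeat match goal with
    | |- context [Nat.ltb ?x ?y] => destruct (Nat.ltb_spec x y)
    | |- context [Nat.leb ?x ?y] => destruct (Nat.leb_spec x y)
    | H : context [Nat.ltb ?x ?y] |- _ => destruct (Nat.ltb_spec x y)
    | H : context [Nat.leb ?x ?y] |- _ => destruct (Nat.leb_spec x y)
    end; lia.
Qed.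

Definition steps_vanish {X : Type} (d : X -> X -> R) (Y : nat -> X) : Prop :=
  forall alpha, 0 < alpha -> exists N, forall p, (N <= p)%nat ->
    d (Y p) (Y (S p)) <= alpha /\ d (Y p) (Y (S (S p))) <= alpha.

Section GeneralizedMetric.

Variables (nu : nat) (X : Type) (d : X -> X -> R).
Hypothesis Hd : gen_metric nu d.

Lemma gen_metric_walk_le (F : nat -> X) :
  (forall i j, (i <= S nu)%nat -> (j <= S nu)%nat -> F i = F j -> i = j) ->
  d (F 0%nat) (F (S nu)) <= sum_f_R0 (fun i => d (F i) (F (S i))) nu.
Proof.
  intros Finj.
  destruct Hd as (_ & _ & _ & Htri).
  assert (Hwalk : F 0%nat :: map F (seq 1 nu) ++ [F (S nu)] = map F (seq 0 (S (S nu)))).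
  { change (seq 0 (S (S nu))) with (0%nat :: seq 1 (S nu)).
    rewrite (seq_S nu 1). cbn [map]. now rewrite map_app. }
  replace (sum_f_R0 _ nu) with (path_len d (map F (seq 0 (S (S nu))))).
  2: { now rewrite path_len_map_seq. }
  rewrite <- Hwalk. apply Htri.
  - now rewrite length_map, length_seq.
  - rewrite Hwalk. apply NoDup_map_NoDup_ForallPairs; [|apply seq_NoDup].
    intros i j Hi Hj. apply in_seq in Hi, Hj. apply Finj; lia.
Qed.

Variables (Y : nat -> X) (N : nat) (alpha : R).
Hypothesis Yinj : forall i j, Y i = Y j -> i = j.
Hypothesis small_steps : forall p, (N <= p)%nat ->
  d (Y p) (Y (S p)) <= alpha /\ d (Y p) (Y (S (S p))) <= alpha.

Lemma dist_short_step_le (a b : nat) :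
  (N <= a)%nat -> (N <= b)%nat -> short_step a b -> d (Y a) (Y b) <= alpha.
Proof.
  destruct Hd as (_ & _ & Hsym & _).
  intros Ha Hb [E|[E|[E|E]]]; subst.
  - replace (a + 1)%nat with (S a) by lia. apply small_steps, Ha.
  - replace (a + 2)%nat with (S (S a)) by lia. apply small_steps, Ha.
  - rewrite Hsym. replace (b + 1)%nat with (S b) by lia. apply small_steps, Hb.
  - rewrite Hsym. replace (b + 2)%nat with (S (S b)) by lia. apply small_steps, Hb.
Qed.

Lemma dist_near_le (n k : nat) : (N <= n)%nat -> (1 <= k <= S nu)%nat ->
  d (Y n) (Y (n + k)%nat) <= INR (S nu) * alpha.
Proof.
  intros Hn Hk.
  destruct (hairpin_walk k (S nu) Hk) as (h & H0 & HL & hinj & hstep).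
  pose proof (gen_metric_walk_le (fun i => Y (n + h i)%nat)) as Hwalk.
  cbv beta in Hwalk. rewrite H0, HL, Nat.add_0_r in Hwalk.
  eapply Rle_trans.
  { apply Hwalk. intros i j Hi Hj E. apply Yinj in E. apply hinj; lia. }
  eapply Rle_trans.
  { apply sum_f_R0_le_head with (c := alpha). intros i Hi.
    apply dist_short_step_le; try lia.
    destruct (hstep i ltac:(lia)) as [E|[E|[E|E]]]; red; lia. }
  assert (Hfirst : d (Y (n + h 0%nat)%nat) (Y (n + h 1%nat)%nat) <= alpha).
  { apply dist_short_step_le; try lia.
    destruct (hstep 0%nat ltac:(lia)) as [E|[E|[E|E]]]; red; lia. }
  rewrite S_INR. lra.
Qed.

Lemma dist_le_via_jump (n r : nat) : (1 <= nu)%nat -> (N <= n)%nat -> (S n < r)%nat ->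
  d (Y n) (Y (r + pred nu)%nat) <= d (Y (S n)) (Y r) + INR nu * alpha.
Proof.
  intros Hnu Hn Hr.
  set (h := fun i => match i with 0%nat => n | 1%nat => S n | S (S i) => (r + i)%nat end).
  assert (Enu : nu = S (pred nu)) by lia.
  pose proof (gen_metric_walk_le (fun i => Y (h i))) as Hwalk.
  cbv beta in Hwalk. change (h 0%nat) with n in Hwalk.
  replace (h (S nu)) with (r + pred nu)%nat in Hwalk by (rewrite Enu; reflexivity).
  eapply Rle_trans.
  { apply Hwalk. intros i j Hi Hj E. apply Yinj in E.
    destruct i as [|[|i]], j as [|[|j]]; simpl in E; lia. }
  rewrite decomp_sum by lia.
  eapply Rle_trans.
  { apply Rplus_le_compat_l, sum_f_R0_le_head with (c := alpha).
    intros [|i] Hi; [lia|]. simpl.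
    rewrite Nat.add_succ_r. apply small_steps. lia. }
  assert (Hfirst : d (Y n) (Y (S n)) <= alpha) by (apply small_steps; lia).
  assert (HINR : INR nu = INR (pred nu) + 1) by (rewrite <- S_INR; f_equal; lia).
  unfold h. rewrite Nat.add_0_r, HINR. lra.
Qed.

End GeneralizedMetric.

Lemma is_limsup_exists (a : nat -> R) : exists L, is_limsup a L.
Proof.
  destruct (Lim_seq.ex_LimSup_seq a) as [[l| |] H];
    [exists (EFin l) | exists EPInf | exists ENInf]; auto.
  split; intros eps Heps; [apply (proj2 (H (mkposreal eps Heps)))|].
  intros N. apply (proj1 (H (mkposreal eps Heps))).
Qed.

Lemma is_limsup_ge (a : nat -> R) (c : R) (L : ereal) :
  is_limsup a L -> (forall i, c <= a i) -> ele (EFin c) L.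
Proof.
  destruct L as [l| |]; simpl; auto; intros HL Ha.
  - apply Rnot_lt_le. intro Hlc.
    destruct (proj1 HL ((c - l) / 2) ltac:(lra)) as [N HN].
    specialize (HN N (le_n N)). specialize (Ha N). lra.
  - destruct (HL c) as [N HN]. specialize (HN N (le_n N)). specialize (Ha N). lra.
Qed.

Lemma is_limsup_le (a : nat -> R) (c : R) (L : ereal) :
  is_limsup a L -> (forall i, a i <= c) -> ele L (EFin c).
Proof.
  destruct L as [l| |]; simpl; auto; intros HL Ha.
  - apply Rnot_lt_le. intro Hcl.
    destruct (proj2 HL ((l - c) / 2) ltac:(lra) 0%nat) as (i & _ & Hi).
    specialize (Ha i). lra.
  - destruct (HL c 0%nat) as (i & _ & Hi). specialize (Ha i). lra.
Qed.

Lemma limsup_le_bounds (u v : nat -> R) (a b : R) :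
  limsup_le u v -> (forall i, a <= u i) -> (forall i, v i <= b) -> a <= b.
Proof.
  intros Huv Hu Hv.
  destruct (is_limsup_exists u) as [Lu HLu], (is_limsup_exists v) as [Lv HLv].
  pose proof (is_limsup_ge u a Lu HLu Hu) as Ha.
  pose proof (is_limsup_le v b Lv HLv Hv) as Hb.
  pose proof (Huv Lu Lv HLu HLv) as Hle.
  destruct Lu, Lv; simpl in *; tauto || lra.
Qed.

Lemma iter_add {X : Type} (T : X -> X) (x : X) (k n : nat) :
  iter (k + n) T x = iter k T (iter n T x).
Proof. induction k as [|k IH]; simpl; congruence. Qed.

Lemma periodic_vanishing (u : nat -> R) (r : nat) :
  (0 < r)%nat -> (forall n, u (n + r)%nat = u n) -> (forall n, 0 <= u n) ->
  (forall eps, 0 < eps -> exists N, forall n, (N <= n)%nat -> u n <= eps) ->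
  forall n, u n = 0.
Proof.
  intros Hr Hper Hu0 Hu n.
  assert (Hrep : forall c, u (n + c * r)%nat = u n).
  { induction c as [|c IH]; [now rewrite Nat.add_0_r|].
    now rewrite Nat.mul_succ_l, Nat.add_assoc, Hper. }
  apply Rle_antisym; [|apply Hu0]. apply Rnot_lt_le. intro Hpos.
  destruct (Hu (u n / 2) ltac:(lra)) as [N HN].
  specialize (HN (n + N * r)%nat ltac:(nia)). rewrite Hrep in HN. lra.
Qed.

Lemma orbit_const_of_repeat {X : Type} (d : X -> X -> R) (T : X -> X) (x : X) (i j : nat) :
  (forall a b, 0 <= d a b) -> (forall a b, d a b = 0 -> a = b) ->
  (i < j)%nat -> iter i T x = iter j T x -> steps_vanish d (fun n => iter n T x) ->
  forall n, (i <= n)%nat -> iter n T x = iter i T x.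
Proof.
  intros Hd0 Hdeq Hij Hrep Hsteps.
  set (u := fun n => d (iter (n + i) T x) (iter (S n + i) T x)).
  assert (Hu : forall n, u n = 0).
  { apply (periodic_vanishing u (j - i)); [lia| |intros; apply Hd0|].
    - intros n. unfold u.
      replace (n + (j - i) + i)%nat with (n + j)%nat by lia.
      replace (S (n + (j - i)) + i)%nat with (S n + j)%nat by lia.
      now rewrite !iter_add, Hrep.
    - intros eps Heps. destruct (Hsteps eps Heps) as [N HN].
      exists N. intros n Hn. apply HN. lia. }
  intros n Hn. replace n with (n - i + i)%nat by lia.
  induction (n - i)%nat as [|k IH]; [reflexivity|].
  rewrite <- IH. symmetry. apply Hdeq, Hu.
Qed.

Lemma gm_cauchy_of_eventually_const {X : Type} (d : X -> X -> R) (Y : nat -> X) (i : nat) :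
  (forall a, d a a = 0) -> (forall n, (i <= n)%nat -> Y n = Y i) -> gm_cauchy d Y.
Proof.
  intros Hdaa HY eps Heps. exists i. intros n Hn k.
  rewrite (HY n Hn), (HY (n + 1 + k)%nat), Hdaa by lia. lra.
Qed.

Lemma steps_vanish_of_cv {X : Type} (d : X -> X -> R) (Y : nat -> X) :
  (forall a b, 0 <= d a b) ->
  Un_cv (fun n => d (Y n) (Y (S n)) + d (Y n) (Y (S (S n)))) 0 -> steps_vanish d Y.
Proof.
  intros Hd0 Hcv alpha Halpha. destruct (Hcv alpha Halpha) as [N HN].
  exists N. intros p Hp. specialize (HN p Hp).
  unfold R_dist in HN. rewrite Rminus_0_r in HN.
  pose proof (Rle_abs (d (Y p) (Y (S p)) + d (Y p) (Y (S (S p))))).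
  pose proof (Hd0 (Y p) (Y (S p))). pose proof (Hd0 (Y p) (Y (S (S p)))).
  lra.
Qed.

Lemma not_gm_cauchy {X : Type} (d : X -> X -> R) (Y : nat -> X) :
  ~ gm_cauchy d Y ->
  exists eps, 0 < eps /\ forall N, exists n k, (N <= n)%nat /\ eps < d (Y n) (Y (n + 1 + k)%nat).
Proof.
  intros Hnc. apply not_all_ex_not in Hnc as [eps Hnc].
  apply imply_to_and in Hnc as [Heps Hnc]. exists eps. split; [exact Heps|].
  intros N. apply not_ex_all_not with (n := N) in Hnc.
  apply not_all_ex_not in Hnc as [n Hnc]. apply imply_to_and in Hnc as [Hn Hnc].
  apply not_all_ex_not in Hnc as [k Hnc]. exists n, k. split; [exact Hn|].
  now apply Rnot_le_lt.
Qed.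

Lemma least_witness (P : nat -> Prop) :
  (exists n, P n) -> exists q, P q /\ forall r, P r -> (q <= r)%nat.
Proof.
  intros HP.
  destruct (dec_inh_nat_subset_has_unique_least_element P (fun n => classic (P n)) HP)
    as (q & Hq & _).
  now exists q.
Qed.

Lemma increasing_pairs_of_frequent (P : nat -> nat -> Prop) :
  (forall M, exists p q, (M <= p)%nat /\ (M <= q)%nat /\ P p q) ->
  exists p q : nat -> nat, strictly_increasing p /\ strictly_increasing q /\
    forall i, P (p i) (q i).
Proof.
  intros HP.
  assert (pick : forall M, {pq : nat * nat | (M <= fst pq)%nat /\ (M <= snd pq)%nat /\
                                             P (fst pq) (snd pq)}).
  { intros M. apply constructive_indefinite_description.
    destruct (HP M) as (p & q & Hpq). now exists (p, q). }
  set (next := fun pq : nat * nat => proj1_sig (pick (S (Nat.max (fst pq) (snd pq))))).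
  set (s := fun i => iter i next (proj1_sig (pick 0%nat))).
  assert (Hstep : forall k, (fst (s k) < fst (s (S k)))%nat /\ (snd (s k) < snd (s (S k)))%nat).
  { intros k. change (s (S k)) with (next (s k)). unfold next.
    pose proof (proj2_sig (pick (S (Nat.max (fst (s k)) (snd (s k)))))) as Hpick.
    cbv beta in Hpick. lia. }
  exists (fun i => fst (s i)), (fun i => snd (s i)). repeat split.
  - intros k. apply Hstep.
  - intros k. apply Hstep.
  - intros [|k]; apply (proj2_sig (pick _)).
Qed.

Lemma separated_pairs_frequent (nu : nat) (X : Type) (d m : X -> X -> R) (Y : nat -> X)
  (eps delta : R) (N0 : nat) :
  (1 <= nu)%nat -> gen_metric nu d -> (forall i j, Y i = Y j -> i = j) ->
  steps_vanish d Y -> 0 < eps -> 0 < delta ->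
  (forall p q, (N0 <= p)%nat -> (N0 <= q)%nat ->
     m (Y p) (Y q) < delta + eps -> d (Y (S p)) (Y (S q)) <= eps) ->
  (forall N, exists n k, (N <= n)%nat /\ eps < d (Y n) (Y (n + 1 + k)%nat)) ->
  forall M, exists p q, (M <= p)%nat /\ (M <= q)%nat /\
    eps + delta <= m (Y p) (Y q) /\ d (Y p) (Y q) <= eps + delta / 2.
Proof.
  intros Hnu Hd Yinj Hsteps Heps Hdelta Hclose Hbad M.
  set (alpha := Rmin eps (delta / 2) / INR (S nu)).
  assert (HSnu : 0 < INR (S nu)) by (apply lt_0_INR; lia).
  assert (Hmin : 0 < Rmin eps (delta / 2)) by (apply Rmin_glb_lt; lra).
  assert (Halpha : 0 < alpha) by (apply Rdiv_lt_0_compat; lra).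
  assert (Hwalk_eps : INR (S nu) * alpha <= eps).
  { unfold alpha. field_simplify; [apply Rmin_l | lra]. }
  assert (Hwalk_delta : INR (S nu) * alpha <= delta / 2).
  { unfold alpha. field_simplify; [apply Rmin_r | lra]. }
  destruct (Hsteps alpha Halpha) as [N1 HN1].
  destruct (Hbad (S (Nat.max M (Nat.max N0 N1)))) as (n & k & Hn & Hgap).
  destruct (least_witness (fun q => (n < q)%nat /\ eps < d (Y n) (Y q)))
    as (q & [Hnq Hexit] & Hfirst); [exists (n + 1 + k)%nat; split; [lia | exact Hgap]|].
  assert (Hinside : forall r, (n < r < q)%nat -> d (Y n) (Y r) <= eps).
  { intros r Hr. apply Rnot_lt_le. intro Hout.
    specialize (Hfirst r (conj (proj1 Hr) Hout)). lia. }
  assert (Hfar : (n + S nu < q)%nat).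
  { apply Nat.nle_gt. intro Hnear.
    pose proof (dist_near_le nu X d Hd Y N1 alpha Yinj HN1 n (q - n) ltac:(lia) ltac:(lia)).
    replace (n + (q - n))%nat with q in * by lia. lra. }
  exists (pred n), (pred q). repeat split; try lia.
  - apply Rnot_lt_le. intro Hm.
    pose proof (Hclose (pred n) (pred q) ltac:(lia) ltac:(lia) ltac:(lra)) as Hd'.
    replace (S (pred n)) with n in Hd' by lia. replace (S (pred q)) with q in Hd' by lia.
    lra.
  - pose proof (dist_le_via_jump nu X d Hd Y N1 alpha Yinj HN1 (pred n) (q - nu)
                  Hnu ltac:(lia) ltac:(lia)) as Hjump.
    replace (q - nu + pred nu)%nat with (pred q) in Hjump by lia.
    replace (S (pred n)) with n in Hjump by lia.
    pose proof (Hinside (q - nu)%nat ltac:(lia)).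
    rewrite S_INR in Hwalk_delta. lra.
Qed.

Theorem theorem3p3 (nu : nat) (X : Type) (d : X -> X -> R) (T : X -> X)
  (m : X -> X -> R) (x : X) :
  (1 <= nu)%nat ->
  gen_metric nu d ->
  (forall a b, 0 <= m a b) ->
  (forall eps, 0 < eps -> exists delta N, 0 < delta /\
     forall p q, (N <= p)%nat -> (N <= q)%nat ->
       m (iter p T x) (iter q T x) < delta + eps ->
       d (iter (S p) T x) (iter (S q) T x) <= eps) ->
  (forall p q : nat -> nat, strictly_increasing p -> strictly_increasing q ->
     limsup_le (fun i => m (iter (p i) T x) (iter (q i) T x))
               (fun i => d (iter (p i) T x) (iter (q i) T x))) ->
  Un_cv (fun n => d (iter n T x) (iter (S n) T x) + d (iter n T x) (iter (S (S n)) T x)) 0 ->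
  gm_cauchy d (fun n => iter n T x).
Proof.
  intros Hnu Hd _ Hclose Hlimsup Hcv.
  pose proof Hd as (Hd0 & Hdeq & _).
  pose proof (steps_vanish_of_cv d (fun n => iter n T x) Hd0 Hcv) as Hsteps.
  destruct (classic (exists i j, (i < j)%nat /\ iter i T x = iter j T x))
    as [(i & j & Hij & Hrep)|Hnorep].
  - apply (gm_cauchy_of_eventually_const d _ i); [intro; now apply Hdeq|].
    apply (orbit_const_of_repeat d T x i j); auto. intros a b. apply Hdeq.
  - assert (Yinj : forall i j, iter i T x = iter j T x -> i = j).
    { intros i j E. destruct (Nat.lt_total i j) as [Hij|[Hij|Hij]]; auto;
        exfalso; apply Hnorep; eauto. }
    apply NNPP. intros Hnc.
    destruct (not_gm_cauchy _ _ Hnc) as (eps & Heps & Hbad).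
    destruct (Hclose eps Heps) as (delta & N0 & Hdelta & HN0).
    destruct (increasing_pairs_of_frequent _
                (separated_pairs_frequent nu X d m _ eps delta N0
                   Hnu Hd Yinj Hsteps Heps Hdelta HN0 Hbad))
      as (p & q & Hp & Hq & Hpq).
    pose proof (limsup_le_bounds _ _ (eps + delta) (eps + delta / 2) (Hlimsup p q Hp Hq)
                  (fun i => proj1 (Hpq i)) (fun i => proj2 (Hpq i))).
    lra.
Qed.
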